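(* Let $W_0\in\mathcal{W}$ and let $W(t)$ be the solution of the assignment flow $\dot W=\Pi_W\big(S(W)\big)$ with initial value $W(0)=W_0$. Then $W(t)$ admits the representation $$W(t)=\exp_{W_0}\big(V(t)\big),$$ where $V(t)\in\mathcal{T}_0$ solves $$\dot V=\Pi_{\mathcal{T}_0}\,S\big(\exp_{W_0}(V)\big),\qquad V(0)=0 .$$
   Context: Let $G=(I,E)$ be a finite undirected graph with neighborhoods $\mathcal{N}_i=\{k\in I: ik\in E\}$, and weights $w_{ik}>0$ with $\sum_{k\in\mathcal{N}_i}w_{ik}=1$ for all $i\in I$. Let $J$ be a finite label set. All operations on vectors (products, quotients, $\log$, $e^{(\cdot)}$) are componentwise. Simplex and tangent space: $\mathcal{S}=\{p\in\mathbb{R}^{|J|}: p_j>0,\ \langle\mathbb{1},p\rangle=1\}$ and $T_0=\{v\in\mathbb{R}^{|J|}:\langle\mathbb{1},v\rangle=0\}$. Write $\mathbb{1}_{\mathcal{S}}=\frac{1}{|J|}\mathbb{1}$. Define $\Pi_{T_0}(z)=z-\langle\mathbb{1}_{\mathcal{S}},z\rangle\mathbb{1}$, and for $p\in\mathcal{S}$, $\Pi_p(z)=(\mathrm{Diag}(p)-pp^\top)z$. Define $\exp_p:\mathbb{R}^{|J|}\to\mathcal{S}$, $\exp_p(z)=\frac{p\,e^{z}}{\langle p,e^{z}\rangle}$. Assignment manifold $\mathcal{W}=\mathcal{S}^{|I|}$ with points $W=(W_i)_{i\in I}$, $W_i\in\mathcal{S}$; $\mathcal{T}_0=T_0^{|I|}$.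 The maps $\Pi_{\mathcal{T}_0}$, $\Pi_W$, $\exp_W$ act blockwise: $(\Pi_{\mathcal{T}_0}Z)_i=\Pi_{T_0}Z_i$, $(\Pi_W Z)_i=\Pi_{W_i}Z_i$, $(\exp_W Z)_i=\exp_{W_i}(Z_i)$ for $Z=(Z_i)_{i\in I}\in\mathbb{R}^{|I||J|}$. Given distance vectors $D_i\in\mathbb{R}^{|J|}$ ($i\in I$) and $\rho>0$, the likelihood vectors are $L_i(W_i)=\frac{W_i e^{-D_i/\rho}}{\langle W_i,e^{-D_i/\rho}\rangle}$. For $W\in\mathcal{W}$ the geometric mean is $\mathcal{G}^w_i(W)=\exp_{W_i}\Big(\log\frac{\prod_{k\in\mathcal{N}_i}W_k^{w_{ik}}}{W_i}\Big)$, and the similarity vectors are $S_i(W)=\mathcal{G}^w_i\big(L(W)\big)$ with $L(W)=(L_i(W_i))_{i\in I}$; $S(W)=(S_i(W))_{i\in I}\in\mathcal{W}$. *)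

From HB Require Import structures.
From mathcomp Require Import all_boot all_order all_algebra.
From mathcomp Require Import all_classical all_reals all_analysis.
Set Implicit Arguments. Unset Strict Implicit. Unset Printing Implicit Defensive.
Import Order.TTheory GRing.Theory Num.Theory.
Local Open Scope ring_scope.

Section AssignmentFlow.
Variables (R : realType) (I J : finType).

Definition vecJ := J -> R.
Definition matIJ := I -> J -> R.

Definition in_simplex (p : vecJ) : Prop :=
  (forall j, 0 < p j) /\ \sum_(j : J) p j = 1.

Definition in_T0 (v : vecJ) : Prop := \sum_(j : J) v j = 0.

Definition in_assign (W : matIJ) : Prop := forall i, in_simplex (W i).
Definition in_calT0 (V : matIJ) : Prop := forall i, in_T0 (V i).

(* Pi_{T0} z = z - <1_S, z> 1 with 1_S = 1/|J| *)
Definition PiT0 (z : vecJ) : vecJ :=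
  fun j => z j - (\sum_(k : J) (#|J|%:R)^-1 * z k).

(* Pi_p z = (Diag(p) - p p^T) z *)
Definition Pip (p z : vecJ) : vecJ :=
  fun j => p j * z j - p j * (\sum_(k : J) p k * z k).

Definition expS (p z : vecJ) : vecJ :=
  fun j => p j * expR (z j) / (\sum_(k : J) p k * expR (z k)).

Definition PicalT0 (Z : matIJ) : matIJ := fun i => PiT0 (Z i).
Definition PiW (W Z : matIJ) : matIJ := fun i => Pip (W i) (Z i).
Definition expW (W Z : matIJ) : matIJ := fun i => expS (W i) (Z i).

Definition likelihood (D : matIJ) (rho : R) (W : matIJ) : matIJ :=
  fun i j => W i j * expR (- D i j / rho) /
             (\sum_(k : J) W i k * expR (- D i k / rho)).

Definition geomean (E : rel I) (w : I -> I -> R) (W : matIJ) : matIJ :=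
  fun i => expS (W i)
    (fun j => ln ((\prod_(k | E i k) (W k j) `^ (w i k)) / W i j)).

Definition similarity (E : rel I) (w : I -> I -> R) (D : matIJ) (rho : R)
  (W : matIJ) : matIJ := geomean E w (likelihood D rho W).

End AssignmentFlow.

(* Put V(t) := Pi_T0 (log W(t) - log W0).  Since exp_p is invariant under adding
   a constant vector to its argument and Pi_T0 only subtracts one, exp_W0 (V(t))
   = exp_W0 (log W(t) - log W0) = W(t).  Along the flow, d/dt log W_i = Pi_{W_i} S_i / W_i
   = S_i - <W_i, S_i> 1, and Pi_T0 again discards the constant, so dV/dt = Pi_T0 S. *)

From HB Require Import structures.
From mathcomp Require Import all_boot all_order all_algebra.
From mathcomp Require Import all_classical all_reals all_analysis.
Set Implicit Arguments. Unset Strict Implicit. Unset Printing Implicit Defensive.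
Import Order.TTheory GRing.Theory Num.Theory.
Local Open Scope ring_scope.

Lemma is_derive_sumr (R : realType) (T : Type) (r : seq T) (P : pred T)
    (h : T -> R -> R) (dh : T -> R) (t : R) :
  (forall k, is_derive t 1 (h k) (dh k)) ->
  is_derive t 1 (fun s => \sum_(k <- r | P k) h k s) (\sum_(k <- r | P k) dh k).
Proof.
move=> hdh; elim: r => [|a r IH].
  under eq_fun do rewrite big_nil.
  by rewrite big_nil; exact: is_derive_cst.
under eq_fun do rewrite big_cons.
by rewrite big_cons; case: (P a) => //; exact: is_deriveD.
Qed.

Section SimplexExponential.
Variables (R : realType) (J : finType).
Implicit Types (p q z : vecJ R J) (c : R).

Lemma expS_subr_cst p z c : expS p (fun j => z j - c) = expS p z.
Proof.
apply/funext => j; rewrite /expS.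
under eq_bigr do rewrite expRB mulrA.
rewrite expRB mulrA -mulr_suml invfM invrK mulrACA mulVf ?mulr1 //.
by rewrite gt_eqF ?expR_gt0.
Qed.

Lemma expS_PiT0 p z : expS p (PiT0 z) = expS p z.
Proof. exact: expS_subr_cst. Qed.

Lemma expS_ln_ratio p q :
  (forall j, 0 < p j) -> in_simplex q -> expS p (fun j => ln (q j) - ln (p j)) = q.
Proof.
move=> p_gt0 [q_gt0 sum_q]; apply/funext => j; rewrite /expS.
have pexp k : p k * expR (ln (q k) - ln (p k)) = q k.
  by rewrite expRB !lnK ?posrE // mulrCA divff ?mulr1 // gt_eqF.
by under eq_bigr do rewrite pexp; rewrite pexp sum_q divr1.
Qed.

Lemma PiT0_subr_cst z c : PiT0 (fun j => z j - c) = PiT0 z.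
Proof.
apply/funext => j; rewrite /PiT0.
have n_neq0 : #|J|%:R != 0 :> R by rewrite pnatr_eq0 -lt0n; apply/card_gt0P; exists j.
rewrite (eq_bigr (fun k => #|J|%:R^-1 * z k - #|J|%:R^-1 * c)) => [|k _]; last by rewrite mulrBr.
by rewrite sumrB sumr_const -mulrnAr -[c *+ _]mulr_natl mulKf // opprB addrA subrK.
Qed.

Lemma PiT0_in_T0 z : in_T0 (PiT0 z).
Proof.
rewrite /in_T0 /PiT0 sumrB sumr_const.
have [J0|J_gt0] := posnP #|J|.
  by rewrite J0 mulr0n subr0 big_pred0 // => k; have := card0_eq J0 k.
by rewrite -mulr_sumr -mulrnAr -[(\sum_i _) *+ _]mulr_natl mulKf ?subrr // pnatr_eq0 -lt0n.
Qed.

Lemma Pip_divl p z j :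
  p j != 0 -> (p j)^-1 * Pip p z j = z j - \sum_k p k * z k.
Proof. by move=> pj_neq0; rewrite /Pip -mulrBr mulKf. Qed.

Lemma is_derive_PiT0 (z : R -> vecJ R J) (dz : vecJ R J) (t : R) (j : J) :
  (forall k, is_derive t 1 (fun s => z s k) (dz k)) ->
  is_derive t 1 (fun s => PiT0 (z s) j) (PiT0 dz j).
Proof.
move=> dz_z; apply: (is_deriveB (dz_z j)).
by apply: is_derive_sumr => k; apply: is_deriveZ.
Qed.

End SimplexExponential.

Section AssignmentFlow.
Variables (R : realType) (I J : finType).

Definition tangent_coord (W0 W : matIJ R I J) : matIJ R I J :=
  fun i => PiT0 (fun j => ln (W i j) - ln (W0 i j)).

Lemma tangent_coord_in_calT0 (W0 W : matIJ R I J) : in_calT0 (tangent_coord W0 W).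
Proof. by move=> i; apply: PiT0_in_T0. Qed.

Lemma tangent_coord_id (W0 : matIJ R I J) : tangent_coord W0 W0 = fun _ _ => 0.
Proof.
apply/funext => i; apply/funext => j.
by rewrite /tangent_coord /PiT0 subrr big1 ?subrr // => k _; rewrite subrr mulr0.
Qed.

Lemma expW_tangent_coord (W0 W : matIJ R I J) :
  in_assign W0 -> in_assign W -> expW W0 (tangent_coord W0 W) = W.
Proof.
move=> W0_assign W_assign; apply/funext => i.
by rewrite /expW expS_PiT0 expS_ln_ratio //; case: (W0_assign i).
Qed.

Lemma is_derive_tangent_coord (F : matIJ R I J -> matIJ R I J) (W0 : matIJ R I J)
    (W : R -> matIJ R I J) (t : R) i j :
  (forall s, in_assign (W s)) ->
  (forall i j, is_derive t (1 : R) (fun s => W s i j)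
                 (PiW (W t) (F (W t)) i j)) ->
  is_derive t (1 : R) (fun s => tangent_coord W0 (W s) i j)
    (PicalT0 (F (W t)) i j).
Proof.
move=> W_assign W_flow.
rewrite /PicalT0 -(PiT0_subr_cst _ (\sum_k W t i k * F (W t) i k)).
apply: is_derive_PiT0 => k.
have Wtik_gt0 : 0 < W t i k by case: (W_assign t i).
rewrite -(Pip_divl _ (lt0r_neq0 Wtik_gt0)) -[X in is_derive _ _ _ X]subr0.
exact: (is_deriveB (is_derive1_comp (is_derive1_ln Wtik_gt0) (W_flow i k))
                   (is_derive_cst _ _ _)).
Qed.

Theorem assignment_flow_exp_representation (F : matIJ R I J -> matIJ R I J)
    (W0 : matIJ R I J) (W : R -> matIJ R I J) :
  in_assign W0 -> (forall t, in_assign (W t)) -> W 0 = W0 ->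
  (forall (t : R) i j, is_derive t (1 : R) (fun s => W s i j)
                         (PiW (W t) (F (W t)) i j)) ->
  exists V : R -> matIJ R I J,
    (forall t, in_calT0 (V t)) /\
    V 0 = (fun _ _ => 0) /\
    (forall (t : R) i j, is_derive t (1 : R) (fun s => V s i j)
                           (PicalT0 (F (expW W0 (V t))) i j)) /\
    (forall t, W t = expW W0 (V t)).
Proof.
move=> W0_assign W_assign W_0 W_flow.
have W_exp t : W t = expW W0 (tangent_coord W0 (W t)).
  by rewrite expW_tangent_coord.
exists (fun t => tangent_coord W0 (W t)); split; first by move=> t; apply: tangent_coord_in_calT0.
split; first by rewrite W_0 tangent_coord_id.
split=> [t i j|//]; rewrite -W_exp.
exact: is_derive_tangent_coord.
Qed.

End AssignmentFlow.

Theorem proposition3p1 (R : realType) (I J : finType)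
  (E : rel I) (w : I -> I -> R) (D : matIJ R I J) (rho : R)
  (W0 : matIJ R I J) (W : R -> matIJ R I J) :
  (* G = (I, E) finite undirected graph *)
  (forall i k, E i k = E k i) ->
  (* positive weights on neighbourhoods, summing to one *)
  (forall i k, E i k -> 0 < w i k) ->
  (forall i, \sum_(k | E i k) w i k = 1) ->
  0 < rho ->
  in_assign W0 ->
  (* W(t) is the solution of the assignment flow with W(0) = W0 *)
  (forall t : R, in_assign (W t)) ->
  W 0 = W0 ->
  (forall (t : R) i j, is_derive t (1 : R) (fun s => W s i j)
                   (PiW (W t) (similarity E w D rho (W t)) i j)) ->
  exists V : R -> matIJ R I J,
    (forall t : R, in_calT0 (V t)) /\
    V 0 = (fun _ _ => 0) /\
    (forall (t : R) i j, is_derive t (1 : R) (fun s => V s i j)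
       (PicalT0 (similarity E w D rho (expW W0 (V t))) i j)) /\
    (forall t : R, W t = expW W0 (V t)).
Proof.
(* The representation holds for any vector field in place of S. *)
move=> _ _ _ _; exact: assignment_flow_exp_representation.
Qed.
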